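(* Let $\mathbf{a}=a_1a_2\cdots a_k\in\mathbb{N}^k$. Then $\hat{A}_{\mathbf{a}}$ and $A_{\mathbf{a}}$ are primitive and have the same Perron–Frobenius eigenvalue $E_{\mathbf{a}}$. Moreover, $q_{kn}(\alpha)\sim E_{\mathbf{a}}^n$ for all $\alpha\in\mathcal{P}(\mathbf{a})$.
   Context: For $n\in\mathbb{N}$ let the alphabet be $\mathscr{A}_n=\{(\mathbf{1},i)_n:1\le i\le n+1\}\cup\{(\mathbf{2},1)_n\}\cup\{(\mathbf{3},i)_n:1\le i\le n\}$; for $e=(\mathbf{t},i)_n$ its type is $\mathbf{t}(e)=\mathbf{t}$. For $\mathbf{t}\in\{\mathbf{1},\mathbf{2},\mathbf{3}\}$ and $\hat e\in\mathscr{A}_m$, write $\mathbf{t}\to\hat e$ iff $(\mathbf{t},\hat e)$ is one of: $(\mathbf{1},(\mathbf{2},1)_m)$; $(\mathbf{2},(\mathbf{1},i)_m)$ with $1\le i\le m+1$; $(\mathbf{2},(\mathbf{3},i)_m)$ with $1\le i\le m$; $(\mathbf{3},(\mathbf{1},i)_m)$ with $1\le i\le m$; $(\mathbf{3},(\mathbf{3},i)_m)$ with $1\le i\le m-1$. For $e\in\mathscr{A}_n,\hat e\in\mathscr{A}_m$, write $e\to\hat e$ iff $\mathbf{t}(e)\to\hat e$. For $\mathbf{a}=a_1\cdots a_k$, let $\mathcal{A}_{\mathbf{a}}=\{e_1\cdots e_k: e_i\in\mathscr{A}_{a_i},\ e_i\to e_{i+1},\ 1\le i<k\}$; for $\mathbf{v}=e_1\cdots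 e_k\in\mathcal{A}_{\mathbf{a}}$ its header is $h_{\mathbf{v}}=e_1$ and its tail type is $\mathbf{t}(\mathbf{v})=\mathbf{t}(e_k)$. The incidence matrix $A_{\mathbf{a}}=(a_{\mathbf{v}\mathbf{w}})_{\mathbf{v},\mathbf{w}\in\mathcal{A}_{\mathbf{a}}}$ has $a_{\mathbf{v}\mathbf{w}}=1$ if $\mathbf{t}(\mathbf{v})\to h_{\mathbf{w}}$ and $0$ otherwise. For $m\in\mathbb{N}$ let $\hat A_m=\begin{pmatrix}0&1&0\\ m+1&0&m\\ m&0&m-1\end{pmatrix}$ and $\hat A_{\mathbf{a}}=\hat A_{a_k}\cdots\hat A_{a_2}\hat A_{a_1}$. A nonnegative square matrix is primitive if some power has all entries positive. For irrational $\alpha=[a_1,a_2,\dots]$ (continued fraction), $q_n(\alpha)$ are the denominators of the convergents: $q_{-1}=0$, $q_0=1$, $q_{n+1}=a_{n+1}q_n+q_{n-1}$. $\mathcal{P}(\mathbf{a})$ is the set of $\alpha\in[0,1]\setminus\mathbb{Q}$ with purely periodic expansion $\alpha=[\overline{a_1,\dots,a_k}]$. For positive sequences, $x_n\sim y_n$ means $C^{-1}y_n\le x_n\le Cy_n$ for some constant $C>1$ independent of $n$. *)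

From HB Require Import structures.
From mathcomp Require Import all_boot all_order all_algebra all_field.
From mathcomp Require Import reals.
Set Implicit Arguments. Unset Strict Implicit. Unset Printing Implicit Defensive.
Import Order.TTheory GRing.Theory Num.Theory.
Local Open Scope ring_scope.

(* Types 1,2,3 are encoded by the ordinals 0,1,2 of 'I_3. *)

Definition in_alph (n : nat) (t : 'I_3) (i : nat) : bool :=
  match val t with
  | 0 => (1 <= i <= n.+1)%N
  | 1 => (i == 1)%N
  | _ => (1 <= i <= n)%N
  end.

Definition arrow (t : 'I_3) (m : nat) (t' : 'I_3) (i : nat) : bool :=
  match val t, val t' with
  | 0, 1 => (i == 1)%N
  | 1, 0 => (1 <= i <= m.+1)%N
  | 1, 2 => (1 <= i <= m)%N
  | 2, 0 => (1 <= i <= m)%N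
  | 2, 2 => (1 <= i <= m.-1)%N
  | _, _ => false
  end.

Definition idxB (a : seq nat) : nat := (\max_(x <- a) x).+2.

Definition letter (a : seq nat) := ('I_3 * 'I_(idxB a))%type.

Definition valid_word (a : seq nat) (w : (size a).-tuple (letter a)) : bool :=
  [forall j : 'I_(size a),
     in_alph (nth 0%N a j) (tnth w j).1 (tnth w j).2] &&
  [forall j : 'I_(size a), forall j' : 'I_(size a),
     (j'.+1 == j)%N ==>
       arrow (tnth w j').1 (nth 0%N a j) (tnth w j).1 (tnth w j).2].

Definition Words (a : seq nat) := {w : (size a).-tuple (letter a) | valid_word w}.

Definition header (a : seq nat) (v : Words a) : letter a :=
  nth (ord0, ord0) (val (val v)) 0.
Definition tail_type (a : seq nat) (v : Words a) : 'I_3 :=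
  (nth (ord0, ord0) (val (val v)) (size a).-1).1.

Definition A_word (a : seq nat) : 'M[algC]_(#|{: Words a}|) :=
  \matrix_(i, j)
    (arrow (tail_type (enum_val i)) (head 0%N a)
           (header (enum_val j)).1 (header (enum_val j)).2)%:R.

Definition Ahat (m : nat) : 'M[algC]_3 :=
  \matrix_(i < 3, j < 3)
    match val i, val j with
    | 0, 1 => 1
    | 1, 0 => m.+1%:R
    | 1, 2 => m%:R
    | 2, 0 => m%:R
    | 2, 2 => m.-1%:R
    | _, _ => 0
    end.

Definition Ahat_word (a : seq nat) : 'M[algC]_3 :=
  foldl (fun M m => Ahat m *m M) 1%:M a.

Definition primitive (n : nat) (M : 'M[algC]_n) : Prop :=
  (forall i j, 0 <= M i j) /\ exists p : nat, forall i j, 0 < (M ^+ p) i j.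

(* Perron-Frobenius eigenvalue = spectral radius *)
Definition PF_eigenvalue (n : nat) (M : 'M[algC]_n) (r : algC) : Prop :=
  (exists2 l, root (char_poly M) l & `|l| = r) /\
  (forall l, root (char_poly M) l -> `|l| <= r).

Definition gauss (R : realType) (x : R) : R := x^-1 - (Num.floor x^-1)%:~R.
(* cf_digit x n = a_{n+1}(x) *)
Definition cf_digit (R : realType) (x : R) (n : nat) : int :=
  Num.floor (iter n (@gauss R) x)^-1.

(* (q_{n-1}, q_n) for digit sequence d (d n = a_{n+1}) *)
Fixpoint qpair (d : nat -> nat) (n : nat) : nat * nat :=
  match n with
  | 0 => (0, 1)%N
  | n'.+1 => let: (x, y) := qpair d n' in (y, d n' * y + x)%N
  end.
Definition qn (R : realType) (x : R) (n : nat) : nat :=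
  (qpair (fun j => `|cf_digit x j|%N) n).2.

Definition in_P (R : realType) (a : seq nat) (x : R) : Prop :=
  0 <= x <= 1 /\ ~ (exists q : rat, x = ratr q) /\
  forall n : nat, cf_digit x n = (nth 0%N a (n %% size a))%:Z.

From HB Require Import structures.
From mathcomp Require Import all_boot all_order all_algebra all_field.
From mathcomp Require Import reals.
From mathcomp Require Import ring lra zify.
Import Order.TTheory GRing.Theory Num.Theory.
Set Implicit Arguments. Unset Strict Implicit. Unset Printing Implicit Defensive.
Local Open Scope ring_scope.

(* Conjugation by one fixed matrix [Qm] turns every [Ahat m] into the block matrix
   diag(K_m, -1), where K_m = [[0, 1], [1, m]].  Hence [Ahat_word a] is similar to
   diag(K, (-1)^k) with K = K_{a_k} ... K_{a_1} a positive integer 2x2 matrix, and its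
   Perron-Frobenius eigenvalue is the larger root E >= 1 of the characteristic
   polynomial of K, which dominates the other root and (-1)^k.
   Grouping admissible words by header and tail type factors A_a = X Y with
   Y X = Ahat_{a_1} ... Ahat_{a_k}, which is similar to diag(K^T, (-1)^k); as X Y and
   Y X have the same nonzero eigenvalues, A_a has the same Perron-Frobenius eigenvalue.
   Primitivity holds because all [Ahat m], m >= 1, share a support graph with walks of
   every length >= 5 between any two vertices.  Finally (q_{kn-1}, q_{kn}) = K^n (0, 1),
   and pairing it with a positive left eigenvector of K shows q_{kn} ~ E^n. *)

(** * Continuant matrices *)

Record nmat2 := NMat2 { n11 : nat; n12 : nat; n21 : nat; n22 : nat }.

Definition nmat2_one := NMat2 1 0 0 1.

Definition tr_nmat2 (t : nmat2) := let: NMat2 p q r s := t in NMat2 p r q s.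

Definition Kmat (m : nat) := NMat2 0 1 1 m.

(* [mulK m t] and [mulKr m t] are the matrix products [Kmat m * t] and [t * Kmat m]. *)
Definition mulK (m : nat) (t : nmat2) :=
  let: NMat2 p q r s := t in NMat2 r s (p + m * r) (q + m * s).

Definition mulKr (m : nat) (t : nmat2) :=
  let: NMat2 p q r s := t in NMat2 q (p + m * q) s (r + m * s).

(* [contl a = K_{a_k} ... K_{a_1}] and [contr a = K_{a_1} ... K_{a_k}]. *)
Definition contl (a : seq nat) := foldl (fun t m => mulK m t) nmat2_one a.
Definition contr (a : seq nat) := foldr mulK nmat2_one a.

Lemma mulK_mulKr m m' t : mulK m' (mulKr m t) = mulKr m (mulK m' t).
Proof. by case: t => p q r s /=; congr NMat2; ring. Qed.

Lemma tr_mulK m t : tr_nmat2 (mulK m t) = mulKr m (tr_nmat2 t).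
Proof. by case: t. Qed.

Lemma contl_rcons a m : contl (rcons a m) = mulK m (contl a).
Proof. by rewrite /contl foldl_rcons. Qed.

Lemma contr_rcons a m : contr (rcons a m) = mulKr m (contr a).
Proof.
elim: a => [|m' a IH] /=; last by rewrite IH mulK_mulKr.
by rewrite /mulKr /=; congr NMat2; ring.
Qed.

Lemma contr_tr a : contr a = tr_nmat2 (contl a).
Proof.
elim/last_ind: a => [|a m IH] //.
by rewrite contr_rcons contl_rcons tr_mulK IH.
Qed.

Definition pos_nmat2 (t : nmat2) := [&& 0 < n12 t, 0 < n21 t & 0 < n22 t]%N.

Lemma contl_pos a : (0 < size a)%N -> all (fun m => 0 < m)%N a -> pos_nmat2 (contl a).
Proof.
elim/last_ind: a => [//|a m IH] _; rewrite all_rcons contl_rcons => /andP[m_gt0 a_pos].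
case: a IH a_pos => [|m' a] IH a_pos; first by rewrite /pos_nmat2 /=; lia.
move: (IH isT a_pos); case: (contl _) => p q r s /and3P[/= q_gt0 r_gt0 s_gt0].
by rewrite /pos_nmat2 /=; apply/and3P; split; nia.
Qed.

(** * Denominators of continued fractions *)

Definition act (t : nmat2) (xy : nat * nat) :=
  let: NMat2 p q r s := t in (p * xy.1 + q * xy.2, r * xy.1 + s * xy.2)%N.

Definition cf_step (xy : nat * nat) (m : nat) := (xy.2, m * xy.2 + xy.1)%N.

Lemma qpairS d n : qpair d n.+1 = cf_step (qpair d n) (d n).
Proof. by rewrite /=; case: (qpair d n). Qed.

Lemma act_one xy : act nmat2_one xy = xy.
Proof. by case: xy => x y; rewrite /= !mul1n !mul0n addn0. Qed.

Lemma act_mulK m t xy : act (mulK m t) xy = cf_step (act t xy) m.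
Proof. by case: t => p q r s; rewrite /cf_step /=; congr pair; ring. Qed.

Lemma foldl_cf_step a xy : foldl cf_step xy a = act (contl a) xy.
Proof.
rewrite -{1}(act_one xy) /contl; elim: a nmat2_one => //= m a IH t.
by rewrite -act_mulK IH.
Qed.

Lemma qpair_cat d j b : (forall i, (i < size b)%N -> d (j + i)%N = nth 0%N b i) ->
  qpair d (j + size b) = act (contl b) (qpair d j).
Proof.
rewrite -foldl_cf_step; elim: b j => [|m b IH] j d_b /=; first by rewrite addn0.
rewrite addnS -addSn IH; last by move=> i lt_ib; rewrite addSnnS d_b.
by rewrite qpairS -[j in d j]addn0 (d_b 0%N).
Qed.

Lemma qpair_mono d n : (forall j, 0 < d j)%N -> ((qpair d n).1 <= (qpair d n).2)%N.
Proof.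
move=> d_pos; elim: n => [|n IH] //; rewrite qpairS /cf_step /=.
by have := d_pos n; nia.
Qed.

Definition periodic (a : seq nat) (j : nat) := nth 0%N a (j %% size a).

Lemma qpair_periodic a n :
  qpair (periodic a) (size a * n.+1) = act (contl a) (qpair (periodic a) (size a * n)).
Proof.
rewrite mulnS addnC qpair_cat // => i lt_ia.
by rewrite /periodic mulnC modnMDl modn_small.
Qed.

(** * The Perron root of a continuant *)

Definition quadK (R : pzRingType) (t : nmat2) (x : R) : R :=
  let: NMat2 p q r s := t in (x - p%:R) * (x - s%:R) - q%:R * r%:R.

Lemma quadK_tr (R : comPzRingType) t (x : R) : quadK (tr_nmat2 t) x = quadK t x.
Proof. by case: t => p q r s /=; rewrite [r%:R * _]mulrC. Qed.

Lemma algRval_quadK t (x : algR) : algRval (quadK t x) = quadK t (algRval x).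
Proof. by case: t => p q r s; rewrite /= !(rmorphB, rmorphM, rmorph_nat). Qed.

Lemma perron_root t : (0 < n12 t)%N -> (0 < n21 t)%N -> exists E : algR,
  [/\ quadK t E = 0, (n11 t)%:R < E, 1 <= E &
      forall l : algC, quadK t l = 0 -> `|l| <= algRval E].
Proof.
case: t => p q r s /= q_gt0 r_gt0.
have q_ge1 : 1 <= q%:R :> algR by rewrite ler1n.
have r_ge1 : 1 <= r%:R :> algR by rewrite ler1n.
have p_ge0 : 0 <= p%:R :> algR by [].
have s_ge0 : 0 <= s%:R :> algR by [].
set D : algR := (p%:R - s%:R) ^+ 2 + 4 * q%:R * r%:R.
have D_ge0 : 0 <= D by have := sqr_ge0 (p%:R - s%:R : algR); rewrite /D; nra.
set z := Num.sqrt D; have z_ge0 : 0 <= z := sqrtr_ge0 D.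
have z2 : z ^+ 2 = D by rewrite sqr_sqrtr.
set E := (p%:R + s%:R + z) / 2.
have rootE : quadK (NMat2 p q r s) E = 0.
  have -> : quadK (NMat2 p q r s) E = (z ^+ 2 - D) / 4 by rewrite /= /E /D; field.
  by rewrite z2 subrr mul0r.
have z_ge2 : 2 <= z.
  have : 4 <= z ^+ 2 by rewrite z2 /D; have := sqr_ge0 (p%:R - s%:R : algR); nra.
  by nra.
have [pE sE] : p%:R < E /\ s%:R < E.
  rewrite /E; have : (p%:R - s%:R) ^+ 2 < z ^+ 2 by rewrite z2 /D; nra.
  by split; nra.
have E_ge1 : 1 <= E by rewrite /E; lra.
clearbody E; exists E; split => // l rootl.
set e := algRval E; have roote : quadK (NMat2 p q r s) e = 0.
  by rewrite -algRval_quadK rootE.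
have : (l - e) * (l - algRval (p%:R + s%:R - E)) = 0.
  have -> : (l - e) * (l - algRval (p%:R + s%:R - E)) =
      quadK (NMat2 p q r s) l - quadK (NMat2 p q r s) e.
    by rewrite rmorphB rmorphD !rmorph_nat /=; ring.
  by rewrite roote subr0; exact: rootl.
move/eqP; rewrite mulf_eq0 !subr_eq0 => /orP[]/eqP->.
  by change (`|E| <= E); rewrite ger0_norm //; lra.
by change (`|p%:R + s%:R - E| <= E); rewrite ler_norml; apply/andP; split; lra.
Qed.

Lemma act_orbit_growth t (E : algR) (u : nat -> nat * nat) :
  quadK t E = 0 -> (n11 t)%:R < E -> u 0%N = (0, 1)%N ->
  (forall n, (u n).1 <= (u n).2)%N -> (forall n, u n.+1 = act t (u n)) ->
  exists C : algR, 1 < C /\ forall n, C^-1 * E ^+ n <= (u n).2%:R <= C * E ^+ n.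
Proof.
case: t => p q r s /= rootE pE u0 u_mono uS.
set K := E - p%:R; have K_gt0 : 0 < K by rewrite subr_gt0.
(* [(r, E - p)] is a left eigenvector of [t] for [E]. *)
have invariant n : r%:R * (u n).1%:R + K * (u n).2%:R = K * E ^+ n.
  elim: n => [|n IH]; first by rewrite u0 /= expr0 mulr0 add0r !mulr1.
  rewrite uS exprS mulrCA -IH; case: (u n) => x y /=.
  apply/eqP; rewrite -subr_eq0 !natrD !natrM.
  have -> : r%:R * (p%:R * x%:R + q%:R * y%:R) + K * (r%:R * x%:R + s%:R * y%:R)
      - E * (r%:R * x%:R + K * y%:R) = - y%:R * ((E - p%:R) * (E - s%:R) - q%:R * r%:R).
    by rewrite /K; ring.
  by rewrite rootE mulr0.
exists ((r%:R + 2 * K) / K); split => [|n].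
  by rewrite ltr_pdivlMr // mul1r; have : 0 <= r%:R :> algR by []; lra.
have := invariant n; have := u_mono n; case: (u n) => x y /= /[swap] invariant_n.
rewrite -(ler_nat algR) => le_xy.
have En_gt0 : 0 < E ^+ n by apply/exprn_gt0/(le_lt_trans _ pE).
have r_ge0 : 0 <= r%:R :> algR by [].
have x_ge0 : 0 <= x%:R :> algR by [].
apply/andP; split.
  by rewrite invf_div mulrAC ler_pdivrMr //; nra.
by rewrite mulrAC ler_pdivlMr //; nra.
Qed.

Lemma qn_periodic (R : realType) a (x : R) n : in_P a x -> qn x n = (qpair (periodic a) n).2.
Proof. by move=> [_ [_ digits]]; rewrite /qn; congr snd; elim: n => //= n ->; rewrite digits. Qed.

Lemma periodic_q_growth a (E : algR) : (0 < size a)%N -> all (fun m => 0 < m)%N a ->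
  quadK (contl a) E = 0 -> (n11 (contl a))%:R < E ->
  exists C : algR, 1 < C /\ forall n,
    C^-1 * E ^+ n <= (qpair (periodic a) (size a * n)).2%:R <= C * E ^+ n.
Proof.
move=> a_gt0 a_pos rootE pE.
apply: (act_orbit_growth (u := fun n => qpair (periodic a) (size a * n))) rootE pE _ _ _
  => [|n|n] /=.
- by rewrite muln0.
- by apply: qpair_mono => j; move/all_nthP: a_pos; apply; rewrite ltn_pmod.
- exact: qpair_periodic.
Qed.

Lemma algRval_sandwich (C E : algR) n (y : nat) :
  C^-1 * E ^+ n <= y%:R <= C * E ^+ n ->
  (algRval C)^-1 * algRval E ^+ n <= y%:R <= algRval C * algRval E ^+ n.
Proof. by rewrite -rmorphXn -fmorphV -!rmorphM -(rmorph_nat algRval). Qed.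

(** * Block diagonal form of the matrices [Ahat_m] *)

Section FieldMatrices.
Variable F : fieldType.

Lemma eigenvalue_conj_sub n (M D Q P : 'M[F]_n) :
  Q *m P = 1%:M -> M *m Q = Q *m D -> {subset eigenvalue M <= eigenvalue D}.
Proof.
move=> QP MQ l /eigenvalueP[v vM v_neq0]; apply/eigenvalueP; exists (v *m Q).
  by rewrite -mulmxA -MQ mulmxA vM scalemxAl.
by apply: contraNneq v_neq0 => vQ0; rewrite -[v]mulmx1 -QP mulmxA vQ0 mul0mx.
Qed.

Lemma eigenvalue_conj n (M D Q P : 'M[F]_n) :
  Q *m P = 1%:M -> P *m Q = 1%:M -> M *m Q = Q *m D -> eigenvalue M =1 eigenvalue D.
Proof.
move=> QP PQ MQ l; apply/idP/idP; first exact: eigenvalue_conj_sub QP MQ l.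
apply: (eigenvalue_conj_sub PQ).
by rewrite -[D *m P]mul1mx -PQ -mulmxA (mulmxA Q) -MQ -mulmxA QP mulmx1.
Qed.

Lemma eigenvalue_mulmxC n m (X : 'M[F]_(n, m)) (Y : 'M[F]_(m, n)) l :
  l != 0 -> eigenvalue (X *m Y) l -> eigenvalue (Y *m X) l.
Proof.
move=> l_neq0 /eigenvalueP[v vXY v_neq0]; apply/eigenvalueP; exists (v *m X).
  by rewrite mulmxA -(mulmxA v) vXY scalemxAl.
apply: contraNneq v_neq0 => vX0.
have : l *: v == 0 by rewrite -vXY mulmxA vX0 mul0mx.
by rewrite scaler_eq0 (negbTE l_neq0).
Qed.

Definition row3 (x y z : F) : 'rV[F]_3 := \row_j nth 0 [:: x; y; z] j.

Lemma row3_eta (v : 'rV[F]_3) : exists x y z, v = row3 x y z.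
Proof.
exists (v 0 ord0), (v 0 (inord 1)), (v 0 (inord 2)); apply/matrixP => i j.
rewrite ord1 mxE; case: j => [[|[|[|j]]] lt_j3] //=; congr (v 0 _);
  by apply: val_inj; rewrite /= ?inordK.
Qed.

Lemma row3_eq0 x y z : (row3 x y z == 0) = [&& x == 0, y == 0 & z == 0].
Proof.
apply/eqP/and3P => [/matrixP v0 | [/eqP-> /eqP-> /eqP->]].
  by split; apply/eqP; [move: (v0 0 ord0) | move: (v0 0 (inord 1)) | move: (v0 0 (inord 2))];
    rewrite !mxE ?inordK.
by apply/matrixP => i j; rewrite !mxE; case: j => [[|[|[|j]]] lt_j3].
Qed.

Lemma scale_row3 l x y z : l *: row3 x y z = row3 (l * x) (l * y) (l * z).
Proof. by apply/matrixP => i j; rewrite !mxE; case: j => [[|[|[|j]]] lt_j3]. Qed.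

Lemma row3_inj x y z x' y' z' :
  row3 x y z = row3 x' y' z' -> [/\ x = x', y = y' & z = z'].
Proof.
move/matrixP => e; split; [move: (e 0 ord0) | move: (e 0 (inord 1)) | move: (e 0 (inord 2))];
  by rewrite !mxE ?inordK.
Qed.

End FieldMatrices.

Definition blockK (t : nmat2) (sg : algC) : 'M[algC]_3 :=
  let: NMat2 p q r s := t in
  \matrix_(i < 3, j < 3)
    match val i, val j with
    | 0, 0 => p%:R | 0, 1 => q%:R | 1, 0 => r%:R | 1, 1 => s%:R
    | 2, 2 => sg | _, _ => 0
    end.

(* For every [m], [Ahat m] maps the columns [c0, c1, c2] of [Qm] to [c1, c0 + m c1, - c2]. *)
Definition Qm : 'M[algC]_3 := \matrix_(i < 3, j < 3)
  match val i, val j with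
  | 0, 0 => 1 | 0, 2 => 1 | 1, 1 => 1 | 1, 2 => -1
  | 2, 0 => -1 | 2, 1 => 1 | 2, 2 => -1 | _, _ => 0
  end.

Definition Rm : 'M[algC]_3 := \matrix_(i < 3, j < 3)
  match val i, val j with
  | 0, 1 => 1 | 0, 2 => -1 | 1, 0 => 1 | 1, 2 => 1
  | 2, 0 => 1 | 2, 1 => -1 | 2, 2 => 1 | _, _ => 0
  end.

Ltac mx3_ext :=
  let i := fresh "i" in let j := fresh "j" in
  apply/matrixP => i j; rewrite !mxE !big_ord_recr !big_ord0 /= !mxE;
  case: i => [[|[|[|?]]] ?] //; case: j => [[|[|[|?]]] ?] //=;
  rewrite ?mulr1n ?mulr0n.

Lemma Qm_Rm : Qm *m Rm = 1%:M.
Proof. by mx3_ext; ring. Qed.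

Lemma Rm_Qm : Rm *m Qm = 1%:M.
Proof. by mx3_ext; ring. Qed.

Lemma Ahat_conj m : (0 < m)%N -> Ahat m *m Qm = Qm *m blockK (Kmat m) (-1).
Proof. by case: m => // m _; mx3_ext; ring. Qed.

Lemma blockK_mulK m t sg :
  blockK (Kmat m) (-1) *m blockK t sg = blockK (mulK m t) (- sg).
Proof. by case: t => p q r s; mx3_ext; ring. Qed.

Lemma blockK_one : blockK nmat2_one 1 = 1%:M.
Proof.
by apply/matrixP => i j; rewrite !mxE; case: i => [[|[|[|?]]] ?]; case: j => [[|[|[|?]]] ?].
Qed.

Lemma row3_mul_blockK p q r s sg x y z :
  row3 x y z *m blockK (NMat2 p q r s) sg =
  row3 (x * p%:R + y * r%:R) (x * q%:R + y * s%:R) (z * sg).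
Proof.
apply/matrixP => i j; rewrite ord1 !mxE !big_ord_recr big_ord0 /= !mxE.
by case: j => [[|[|[|?]]] ?] //=; ring.
Qed.

Lemma Ahat_word_rcons a m : Ahat_word (rcons a m) = Ahat m *m Ahat_word a.
Proof. by rewrite /Ahat_word foldl_rcons. Qed.

Definition Ahat_rword (a : seq nat) : 'M[algC]_3 :=
  foldr (fun m M => Ahat m *m M) 1%:M a.

Lemma Ahat_word_conj a : all (fun m => 0 < m)%N a ->
  Ahat_word a *m Qm = Qm *m blockK (contl a) ((-1) ^+ size a).
Proof.
elim/last_ind: a => [|a m IH]; first by rewrite mul1mx expr0 blockK_one mulmx1.
rewrite all_rcons => /andP[m_gt0 /IH conj_a].
rewrite Ahat_word_rcons contl_rcons size_rcons exprS mulN1r -mulmxA conj_a.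
by rewrite mulmxA Ahat_conj // -mulmxA blockK_mulK.
Qed.

Lemma Ahat_rword_conj a : all (fun m => 0 < m)%N a ->
  Ahat_rword a *m Qm = Qm *m blockK (tr_nmat2 (contl a)) ((-1) ^+ size a).
Proof.
rewrite -contr_tr; elim: a => [|m a IH]; first by rewrite mul1mx expr0 blockK_one mulmx1.
move=> /= /andP[m_gt0 /IH conj_a].
by rewrite -mulmxA conj_a mulmxA Ahat_conj // -mulmxA blockK_mulK exprS mulN1r.
Qed.

Lemma eigenvalue_blockK t sg l : (0 < n21 t)%N ->
  eigenvalue (blockK t sg) l = (l == sg) || (quadK t l == 0).
Proof.
case: t => p q r s /= r_gt0; apply/eigenvalueP/orP => [[v] | [/eqP-> | /eqP root_l]].
- have [x [y [z ->]]] := row3_eta v.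
  rewrite row3_mul_blockK scale_row3 row3_eq0 => /row3_inj[ex ey ez] v_neq0.
  have [z0 | z_neq0] := eqVneq z 0; last by left; apply/eqP/(mulIf z_neq0); rewrite -ez mulrC.
  right; rewrite z0 eqxx andbT negb_and in v_neq0.
  set d := (l - p%:R) * (l - s%:R) - q%:R * r%:R.
  have dx : d * x = 0.
    have -> : d * x = (l - s%:R) * (l * x - (x * p%:R + y * r%:R))
                      + r%:R * (l * y - (x * q%:R + y * s%:R)) by rewrite /d; ring.
    by rewrite ex ey !subrr !mulr0 addr0.
  have dy : d * y = 0.
    have -> : d * y = (l - p%:R) * (l * y - (x * q%:R + y * s%:R))
                      + q%:R * (l * x - (x * p%:R + y * r%:R)) by rewrite /d; ring.
    by rewrite ex ey !subrr !mulr0 addr0.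
  by case/orP: v_neq0 => [x_neq0 | y_neq0]; apply/eqP;
    [apply: (mulIf x_neq0) | apply: (mulIf y_neq0)]; rewrite mul0r.
- exists (row3 0 0 1); last by rewrite row3_eq0 oner_eq0 !eqxx.
  by rewrite row3_mul_blockK scale_row3 !mul0r !mulr0 !addr0 mul1r mulr1.
- exists (row3 r%:R (l - p%:R) 0); last by rewrite row3_eq0 pnatr_eq0 (gtn_eqF r_gt0).
  rewrite row3_mul_blockK scale_row3 !mul0r mulr0; congr row3; first by ring.
  apply/eqP; rewrite -subr_eq0; apply/eqP.
  transitivity (- ((l - p%:R) * (l - s%:R) - q%:R * r%:R)); first by ring.
  by rewrite root_l oppr0.
Qed.

Lemma PF_eigenvalue_conj_blockK (M : 'M[algC]_3) t sg E :
  M *m Qm = Qm *m blockK t sg -> (0 < n21 t)%N -> `|sg| <= E ->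
  quadK t E = 0 -> 0 <= E -> (forall l, quadK t l = 0 -> `|l| <= E) ->
  PF_eigenvalue M E.
Proof.
move=> conjM r_gt0 sg_le rootE E_ge0 maxE.
have rootM l : root (char_poly M) l = (l == sg) || (quadK t l == 0).
  by rewrite -eigenvalue_root_char (eigenvalue_conj Qm_Rm Rm_Qm conjM) eigenvalue_blockK.
split; first by exists E; [rewrite rootM rootE eqxx orbT | exact: ger0_norm].
by move=> l; rewrite rootM => /orP[/eqP-> // | /eqP/maxE].
Qed.

Lemma PF_eigenvalue_mulmxC n m (X : 'M[algC]_(n, m)) (Y : 'M[algC]_(m, n)) E :
  0 < E -> PF_eigenvalue (Y *m X) E -> PF_eigenvalue (X *m Y) E.
Proof.
move=> E_gt0 [[l root_l norm_l] maxE].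
have l_neq0 : l != 0 by rewrite -normr_eq0 norm_l gt_eqF.
split.
  exists l => //; rewrite -eigenvalue_root_char.
  by apply: eigenvalue_mulmxC l_neq0 _; rewrite eigenvalue_root_char.
move=> l'; have [-> _ | l'_neq0] := eqVneq l' 0; first by rewrite normr0 ltW.
rewrite -!eigenvalue_root_char => /(eigenvalue_mulmxC l'_neq0).
by rewrite eigenvalue_root_char => /maxE.
Qed.

(** * Primitivity *)

Definition nonneg_mx n m (M : 'M[algC]_(n, m)) := forall i j, 0 <= M i j.

Lemma nonneg_mulmx n m k (A : 'M[algC]_(n, m)) (B : 'M[algC]_(m, k)) :
  nonneg_mx A -> nonneg_mx B -> nonneg_mx (A *m B).
Proof. by move=> A_ge0 B_ge0 i j; rewrite mxE sumr_ge0 // => l _; apply: mulr_ge0. Qed.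

Lemma mulmx_gt0 n m k (A : 'M[algC]_(n, m)) (B : 'M[algC]_(m, k)) i l j :
  nonneg_mx A -> nonneg_mx B -> 0 < A i l -> 0 < B l j -> 0 < (A *m B) i j.
Proof.
move=> A_ge0 B_ge0 A_il B_lj; rewrite mxE (bigD1 l) //= ltr_wpDr ?mulr_gt0 //.
by rewrite sumr_ge0 // => l' _; apply: mulr_ge0.
Qed.

Definition ords3 : seq 'I_3 := [:: @Ordinal 3 0 isT; @Ordinal 3 1 isT; @Ordinal 3 2 isT].

Lemma mem_ords3 (i : 'I_3) : i \in ords3.
Proof. by rewrite !inE; case: i => [[|[|[|?]]] ?]. Qed.

(* The common support of the matrices [Ahat m] with [m >= 1]. *)
Definition Ahat_edge (i j : 'I_3) : bool :=
  ((val i, val j) \in [:: (0, 1); (1, 0); (1, 2); (2, 0)])%N.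

Fixpoint walk (L : nat) (i j : 'I_3) : bool :=
  if L is L'.+1 then has (fun l => Ahat_edge i l && walk L' l j) ords3 else i == j.

Lemma walkD L1 L2 i j :
  walk (L1 + L2) i j -> exists l, walk L1 i l /\ walk L2 l j.
Proof.
elim: L1 i => [|L1 IH] i; first by exists i; rewrite /= eqxx.
rewrite addSn => /hasP[l _ /andP[e_il /IH[l' [w1 w2]]]]; exists l'; split => //.
by apply/hasP; exists l; rewrite ?mem_ords3 ?e_il.
Qed.

Lemma walk_full L i j : (5 <= L)%N -> walk L i j.
Proof.
have walk5 : all (fun i => all (walk 5 i) ords3) ords3 by vm_compute.
elim: L i j => [|L IH] i j //; rewrite leq_eqVlt => /orP[/eqP <- | lt5L].
  by move/allP: walk5 => /(_ i (mem_ords3 i)) /allP /(_ j (mem_ords3 j)).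
have [l e_il] : exists l, Ahat_edge i l.
  by case: i => [[|[|[|?]]] // ?]; [exists (@Ordinal 3 1 isT) | exists ord0 | exists ord0];
    vm_compute.
apply/hasP; exists l; first exact: mem_ords3.
by rewrite e_il; apply: IH; rewrite -ltnS.
Qed.

Definition pos_on (L : nat) (M : 'M[algC]_3) :=
  nonneg_mx M /\ forall i j, walk L i j -> 0 < M i j.

Lemma pos_on1 : pos_on 0 1%:M.
Proof.
split=> [i j | i j /eqP->]; rewrite mxE; last by rewrite eqxx ltr01.
by case: (i == j).
Qed.

Lemma pos_on_mulmx L1 L2 M1 M2 :
  pos_on L1 M1 -> pos_on L2 M2 -> pos_on (L1 + L2) (M1 *m M2).
Proof.
move=> [M1_ge0 M1_gt0] [M2_ge0 M2_gt0]; split; first exact: nonneg_mulmx.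
by move=> i j /walkD[l [w1 w2]]; apply: mulmx_gt0 (M1_gt0 _ _ w1) (M2_gt0 _ _ w2).
Qed.

Lemma pos_on_exp L M n : pos_on L M -> pos_on (n * L) (M ^+ n).
Proof.
move=> posM; elim: n => [|n IH]; first exact: pos_on1.
by rewrite exprS mulSn; apply: pos_on_mulmx.
Qed.

Lemma pos_on_Ahat m : (0 < m)%N -> pos_on 1 (Ahat m).
Proof.
case: m => // m _; split.
  by move=> i j; rewrite mxE; case: i => [[|[|[|?]]] ?]; case: j => [[|[|[|?]]] ?].
move=> i j /hasP[l _ /andP[e_il /eqP<-]]; rewrite mxE; move: e_il; rewrite /Ahat_edge.
by case: i => [[|[|[|?]]] ?]; case: l => [[|[|[|?]]] ?] //=; rewrite ltr0n.
Qed.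

Lemma pos_on_Ahat_word a : all (fun m => 0 < m)%N a -> pos_on (size a) (Ahat_word a).
Proof.
elim/last_ind: a => [_ | a m IH]; first exact: pos_on1.
rewrite all_rcons size_rcons Ahat_word_rcons => /andP[m_gt0 /IH posA].
exact: pos_on_mulmx (pos_on_Ahat m_gt0) posA.
Qed.

Lemma pos_on_Ahat_rword a : all (fun m => 0 < m)%N a -> pos_on (size a) (Ahat_rword a).
Proof.
elim: a => [_ | m a IH /= /andP[m_gt0 /IH posA]]; first exact: pos_on1.
exact: pos_on_mulmx (pos_on_Ahat m_gt0) posA.
Qed.

Lemma primitive_Ahat_word a :
  (0 < size a)%N -> all (fun m => 0 < m)%N a -> primitive (Ahat_word a).
Proof.
move=> a_gt0 /pos_on_Ahat_word posA; split; first by case: posA.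
have [_ posA5] := pos_on_exp 5 posA.
by exists 5%N => i j; apply/posA5/walk_full; rewrite -[5%N]muln1 leq_mul2l.
Qed.

(** * Counting admissible words *)

Lemma sum_tuple0 (T : finType) (F : 0.-tuple T -> algC) : \sum_w F w = F [tuple].
Proof. by rewrite (big_pred1 [tuple]) // => w; apply/esym/eqP; exact: tuple0. Qed.

Lemma sum_tupleS n (T : finType) (F : n.+1.-tuple T -> algC) :
  \sum_w F w = \sum_x \sum_(w : n.-tuple T) F [tuple of x :: w].
Proof.
rewrite pair_big /= (reindex (fun p : T * n.-tuple T => [tuple of p.1 :: p.2])) //=.
exists (fun w => (thead w, [tuple of behead w])) => [[x w] _ | w _] /=.
  by rewrite theadE; congr pair; apply: val_inj.
by rewrite [RHS]tuple_eta.
Qed.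

Lemma count_interval B c : (\sum_(i < B) (1 <= i <= c)%N)%N = minn c B.-1.
Proof.
elim: B => [|B IH]; first by rewrite big_ord0 minn0.
rewrite big_ord_recr /= IH; case: B IH => [|B] IH /=; first by rewrite minn0.
by case: (leqP B.+1 c) => le_Bc; rewrite ?le_Bc /=; lia.
Qed.

Lemma sum_arrow B m (t t' : 'I_3) : (m.+1 < B)%N ->
  \sum_(i < B) (arrow t m t' i : nat)%:R = Ahat m t t'.
Proof.
move=> lt_mB.
have interval c : (c < B)%N -> \sum_(i < B) ((1 <= i <= c)%N : nat)%:R = c%:R :> algC.
  by move=> lt_cB; rewrite -natr_sum count_interval; congr _%:R; lia.
have one : \sum_(i < B) ((nat_of_ord i == 1)%N : nat)%:R = 1 :> algC.
  rewrite -natr_sum (bigD1 (Ordinal (leq_ltn_trans (ltn0Sn m) lt_mB))) //=.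
  rewrite big1 ?addn0 // => i.
  by rewrite -(inj_eq val_inj) /= => /negPf->.
rewrite mxE /arrow.
case: t => [[|[|[|?]]] ?] //; case: t' => [[|[|[|?]]] ?] //=;
  rewrite ?one ?interval ?big1 //; lia.
Qed.

Fixpoint arrow_chain B (t : 'I_3) (b : seq nat) (w : seq ('I_3 * 'I_B)) : bool :=
  match b, w with
  | m :: b', e :: w' => arrow t m e.1 e.2 && arrow_chain e.1 b' w'
  | [::], [::] => true
  | _, _ => false
  end.

Lemma sum_arrow_chain B b : all (fun m => m.+1 < B)%N b -> forall t t' : 'I_3,
  \sum_(w : (size b).-tuple ('I_3 * 'I_B))
     (arrow_chain t b w && (last t (map fst w) == t') : nat)%:R = Ahat_rword b t t'.
Proof.
elim: b => [_ t t' | m b IH /= /andP[lt_mB /IH{}IH] t t']; first by rewrite sum_tuple0 mxE.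
rewrite sum_tupleS.
under eq_bigr => e _ do under eq_bigr => w _ do rewrite /= -andbA -mulnb natrM.
under eq_bigr => e _ do rewrite -big_distrr /= IH.
rewrite -(pair_big xpredT xpredT
  (fun t'' (i : 'I_B) => (arrow t m t'' i : nat)%:R * Ahat_rword b t'' t')) /= mxE.
by apply: eq_bigr => t'' _; rewrite -big_distrl /= sum_arrow.
Qed.

Lemma arrow_chain_nth B t b (w : seq ('I_3 * 'I_B)) e0 :
  arrow_chain t b w = (size w == size b) &&
    all (fun j => arrow (nth t (t :: map fst w) j) (nth 0%N b j) (nth e0 w j).1 (nth e0 w j).2)
        (iota 0 (size b)).
Proof.
elim: b t w => [|m b IH] t [|e w] //=.
have -> : iota 1 (size b) = map (addn 1) (iota 0 (size b)) by rewrite -iotaDl.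
rewrite IH eqSS all_map; case: eqP => [size_wb | _]; rewrite /= ?andbF //.
congr (_ && _); apply: eq_in_all => j; rewrite mem_iota /= add0n => lt_jb.
by congr arrow; apply: set_nth_default; rewrite /= size_map size_wb ltnW.
Qed.

Lemma arrow_in_alph t m t' i : arrow t m t' i -> in_alph m t' i.
Proof.
rewrite /arrow /in_alph.
by case: t => [[|[|[|?]]] ?] //; case: t' => [[|[|[|?]]] ?] //=; lia.
Qed.

Lemma valid_word_arrow_chain a (w : (size a).-tuple (letter a)) t : (0 < size a)%N ->
  valid_word w && arrow t (head 0%N a) (nth (ord0, ord0) w 0).1 (nth (ord0, ord0) w 0).2
  = arrow_chain t a w.
Proof.
move=> a_gt0; rewrite (arrow_chain_nth _ _ _ (ord0, ord0)) size_tuple eqxx /=.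
rewrite /valid_word -andbA; apply/and3P/allP => [[_ /forallP chain head_w] j | chain].
  rewrite mem_iota add0n => /= lt_ja; case: j lt_ja => [|j] lt_ja /=; first by rewrite nth0.
  move: (chain (Ordinal lt_ja)) => /forallP /(_ (Ordinal (ltnW lt_ja))) /implyP /(_ (eqxx _)).
  by rewrite !(tnth_nth (ord0, ord0)) /= (nth_map (ord0, ord0)) // size_tuple ltnW.
have in_iota (j : 'I_(size a)) : nat_of_ord j \in iota 0 (size a).
  by rewrite mem_iota leq0n add0n ltn_ord.
have chain_j (j : 'I_(size a)) := chain _ (in_iota j).
split.
- apply/forallP => j; rewrite (tnth_nth (ord0, ord0)).
  exact: arrow_in_alph (chain_j j).
- apply/forallP => j; apply/forallP => j'; apply/implyP => /eqP j'S.
  move: (chain_j j); rewrite !(tnth_nth (ord0, ord0)) -j'S /= (nth_map (ord0, ord0)) //.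
  by rewrite size_tuple ltnW // j'S.
- by move: (chain_j (Ordinal a_gt0)); rewrite /= nth0.
Qed.

Definition tail_mx a : 'M[algC]_(#|{: Words a}|, 3) :=
  \matrix_(i, t) (tail_type (enum_val i) == t : nat)%:R.

Definition head_mx a : 'M[algC]_(3, #|{: Words a}|) :=
  \matrix_(t, j) (arrow t (head 0%N a) (header (enum_val j)).1 (header (enum_val j)).2 : nat)%:R.

Lemma A_word_factor a : A_word a = tail_mx a *m head_mx a.
Proof.
apply/matrixP => i j; rewrite !mxE (bigD1 (tail_type (enum_val i))) //= big1.
  by rewrite !mxE eqxx mul1r addr0.
by move=> t t_neq; rewrite !mxE eq_sym (negbTE t_neq) mul0r.
Qed.

Lemma sum_Words a (G : (size a).-tuple (letter a) -> algC) :
  \sum_(w : Words a) G (val w) = \sum_(w | valid_word w) G w.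
Proof.
rewrite (reindex_omap (val : Words a -> _) insub) => [|w valid_w]; last by rewrite insubT.
by apply: eq_bigl => -[w valid_w] /=; rewrite insubT ?valid_w /= eqxx.
Qed.

Lemma last_map_fst (T U : Type) (s : seq (T * U)) t e0 : (0 < size s)%N ->
  last t (map fst s) = (nth e0 s (size s).-1).1.
Proof.
case: s => [|e s] //= _.
by rewrite (last_map fst) (set_nth_default e) ?ltnSn // (nth_last e).
Qed.

Lemma head_mx_tail_mx a : (0 < size a)%N -> head_mx a *m tail_mx a = Ahat_rword a.
Proof.
move=> a_gt0; apply/matrixP => t t'; rewrite !mxE.
rewrite -(sum_arrow_chain (B := idxB a)); last first.
  by apply/allP => m m_a; rewrite /idxB !ltnS leq_bigmax_seq.
under eq_bigr => j _ do rewrite !mxE -natrM mulnb.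
rewrite -(big_enum_val (A := {: Words a})
  (fun w => (arrow t (head 0%N a) (header w).1 (header w).2 && (tail_type w == t') : nat)%:R)).
rewrite (eq_bigl xpredT) //= (sum_Words (fun w =>
  (arrow t (head 0%N a) (nth (ord0, ord0) w 0).1 (nth (ord0, ord0) w 0).2
   && ((nth (ord0, ord0) w (size a).-1).1 == t') : nat)%:R)).
rewrite big_mkcond /=; apply: eq_bigr => w _.
rewrite -(valid_word_arrow_chain w t a_gt0).
rewrite (last_map_fst _ (ord0, ord0)) size_tuple //.
by case: (valid_word w); rewrite /= ?andbA.
Qed.

Lemma in_alph_arrow m t' i : (0 < m)%N -> in_alph m t' i -> exists t, arrow t m t' i.
Proof.
move=> m_gt0; case: t' => [[|[|[|?]]] ?] //= alph_i.
- by exists (@Ordinal 3 1 isT).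
- by exists (@Ordinal 3 0 isT).
- by exists (@Ordinal 3 1 isT).
Qed.

Lemma header_arrow a (w : Words a) : (0 < size a)%N -> all (fun m => 0 < m)%N a ->
  exists t, arrow t (head 0%N a) (header w).1 (header w).2.
Proof.
move=> a_gt0 a_pos; apply: in_alph_arrow.
  by case: a a_gt0 a_pos {w} => [|m a] //= _ /andP[].
have /andP[/forallP /(_ (Ordinal a_gt0)) alph_w _] := valP w.
by rewrite (tnth_nth (ord0, ord0)) /= nth0 in alph_w.
Qed.

Lemma exp_mulmxC (R : pzRingType) n m (X : 'M[R]_(n, m)) (Y : 'M[R]_(m, n)) k :
  (X *m Y) ^+ k.+1 = X *m (Y *m X) ^+ k *m Y.
Proof.
elim: k => [|k IH]; first by rewrite expr1 expr0 mulmx1.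
by rewrite exprS IH -!mulmxE exprS -!mulmxE !mulmxA.
Qed.

Lemma primitive_A_word a :
  (0 < size a)%N -> all (fun m => 0 < m)%N a -> primitive (A_word a).
Proof.
move=> a_gt0 a_pos; split=> [i j | ]; first by rewrite mxE ler0n.
have tail_ge0 : nonneg_mx (tail_mx a) by move=> i t; rewrite mxE ler0n.
have head_ge0 : nonneg_mx (head_mx a) by move=> t j; rewrite mxE ler0n.
have [R5_ge0 R5_gt0] := pos_on_exp 5 (pos_on_Ahat_rword a_pos).
exists 6%N => i j; rewrite A_word_factor exp_mulmxC head_mx_tail_mx //.
have [t t_head] := header_arrow (enum_val j) a_gt0 a_pos.
apply: (mulmx_gt0 (l := t) (nonneg_mulmx tail_ge0 R5_ge0) head_ge0).
  apply: (mulmx_gt0 (l := tail_type (enum_val i)) tail_ge0 R5_ge0).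
    by rewrite mxE eqxx ltr01.
  by apply/R5_gt0/walk_full; rewrite -[5%N]muln1 leq_mul2l.
by rewrite mxE t_head ltr01.
Qed.

Theorem lemma4p1 (R : realType) (a : seq nat) :
  (0 < size a)%N -> all (fun x => 0 < x)%N a ->
  primitive (Ahat_word a) /\ primitive (A_word a) /\
  exists E : algC,
    PF_eigenvalue (Ahat_word a) E /\ PF_eigenvalue (A_word a) E /\
    forall x : R, in_P a x ->
      exists C : algC, 1 < C /\
        forall n : nat,
          C^-1 * E ^+ n <= (qn x (size a * n))%:R <= C * E ^+ n.
Proof.
move=> a_gt0 a_pos; split; first exact: primitive_Ahat_word.
split; first exact: primitive_A_word.
have /and3P[q_gt0 r_gt0 _] := contl_pos a_gt0 a_pos.
have [E [rootE pE E_ge1 maxE]] := perron_root q_gt0 r_gt0.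
have E_gt0 : 0 < algRval E := lt_le_trans ltr01 (E_ge1 : 1 <= algRval E).
have sg_le : `|(-1) ^+ size a : algC| <= algRval E by rewrite normrX normrN1 expr1n.
have rootEC : quadK (contl a) (algRval E) = 0 by rewrite -algRval_quadK rootE.
exists (algRval E); split; [|split].
- exact: PF_eigenvalue_conj_blockK (Ahat_word_conj a_pos) r_gt0 sg_le rootEC (ltW E_gt0) maxE.
- rewrite A_word_factor; apply: (PF_eigenvalue_mulmxC E_gt0); rewrite head_mx_tail_mx //.
  apply: (PF_eigenvalue_conj_blockK (Ahat_rword_conj a_pos)) => [|//|||l];
    rewrite ?quadK_tr ?(ltW E_gt0) //; first by case: (contl a) q_gt0.
  exact: maxE.
- move=> x in_P_x; have [C [C_gt1 bounds]] := periodic_q_growth a_gt0 a_pos rootE pE.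
  by exists (algRval C); split => // n; rewrite (qn_periodic _ in_P_x); apply: algRval_sandwich.
Qed.
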